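(* Consider an instance of the robust flow design problem on a directed graph $D=(V,A)$ with source $s$, sink $t$, capacities $u\in\mathbb{R}_+^A$, protection cost coefficients $\gamma\in\mathbb{R}_+^A$, flow player budget $B_F>0$ and interdictor budget $B_I\ge0$. There exists an optimal solution $(x^*,c^* )$ such that for all $e\in A^*$, $$c^*_e=\begin{cases}\dfrac{B_F}{\Gamma(x^* )}&\text{if there exists }P\in\mathcal{P}\text{ with }e\in P\text{ and }x^*_P>0,\\[1ex] 0&\text{otherwise,}\end{cases}$$ where $\Gamma(x):=\sum_{P\in\mathcal{P}}\sum_{e\in P}\gamma_e x_P$.
   Context: $\mathcal{P}$ is the set of $s$-$t$-paths in $D$ and $X=\{x\in\mathbb{R}_+^{\mathcal{P}}:\sum_{P\ni e}x_P\le u_e\ \forall e\in A\}$. $A^*=\{e\in A:\gamma_e>0\}$. In the design problem the flow player chooses $x\in X$ and interdiction costs $c\in\mathbb{R}_+^A$ subject to $\sum_{e\in A}\gamma_e c_e\sum_{P\in\mathcal{P}:e\in P}x_P\le B_F$; for arcs with $\gamma_e=0$ one has $c_e=\infty$ (flow cannot be stolen there). The interdictor then chooses $z\in\mathbb{R}_+^{A\times\mathcal{P}}$ with $\sum_{e\in A}c_e\sum_{P\ni e}z_{e,P}\le B_I$ (and $z_{e,P}=0$ if $c_e=\infty$), and the value is $\mathrm{val}(x,z)=\sum_{P\in\mathcal{P}}(x_P-\sum_{e\in P}z_{e,P})^+$. An optimal solution is a feasible pair $(x,c)$ maximizing $\min_z\mathrm{val}(x,z)$. *)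

From HB Require Import structures.
From mathcomp Require Import all_boot all_order all_algebra.
From mathcomp Require Import reals.
Set Implicit Arguments. Unset Strict Implicit. Unset Printing Implicit Defensive.
Import Order.TTheory GRing.Theory Num.Theory.
Local Open Scope ring_scope.

(* Directed multigraph D = (V, A): arc a goes from tl a to hd a. *)
Section Paths.
Variables (V A : finType) (tl hd : A -> V) (s t : V).

Definition stpath (p : seq A) : bool :=
  match p with
  | [::] => false
  | a :: p' => [&& tl a == s, path (fun a b => hd a == tl b) a p',
                  hd (last a p') == t & uniq (s :: map hd p)]
  end.

(* Arc sets of simple s-t paths (a simple path is determined by its arc set). *)
Definition is_stpath_set (S : {set A}) : bool :=
  [exists tup : (#|S|).-tuple A, stpath tup && (S == [set a in tup])].

Definition stpath_t : finType := {S : {set A} | is_stpath_set S}.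
End Paths.

Section Design.
Variables (R : realType) (V A : finType) (tl hd : A -> V) (s t : V).
Local Notation P_t := (stpath_t tl hd s t).
Variables (u gamma : A -> R) (BF BI : R).

Definition arc_flow (x : P_t -> R) (e : A) : R :=
  \sum_(P : P_t | e \in val P) x P.

Definition Gamma (x : P_t -> R) : R :=
  \sum_(P : P_t) \sum_(e in val P) gamma e * x P.

Definition flow_feasible (x : P_t -> R) : Prop :=
  (forall P, 0 <= x P) /\ (forall e, arc_flow x e <= u e).

(* For arcs with gamma_e = 0
   the cost is c_e = infinity; the value c e stored there is a dummy that
   plays no role (it is multiplied by gamma_e = 0 here, and the interdictor
   is forbidden to use such arcs). *)
Definition design_feasible (x : P_t -> R) (c : A -> R) : Prop :=
  flow_feasible x /\ (forall e, 0 < gamma e -> 0 <= c e) /\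
  \sum_(e : A) gamma e * c e * arc_flow x e <= BF.

Definition interdiction_feasible (c : A -> R) (z : A -> P_t -> R) : Prop :=
  (forall e P, 0 <= z e P) /\
  (forall e P, gamma e = 0 -> z e P = 0) /\
  \sum_(e : A) c e * (\sum_(P : P_t | e \in val P) z e P) <= BI.

Definition val_xz (x : P_t -> R) (z : A -> P_t -> R) : R :=
  \sum_(P : P_t) Num.max 0 (x P - \sum_(e in val P) z e P).

(* (x,c) is optimal: feasible, and its worst-case value inf_z val(x,z) is at
   least that of every feasible (x',c'); expressed via lower bounds so that no
   attainment of the infimum is presupposed. *)
Definition design_optimal (x : P_t -> R) (c : A -> R) : Prop :=
  design_feasible x c /\
  forall (x' : P_t -> R) (c' : A -> R), design_feasible x' c' ->
  forall r : R,
    (forall z', interdiction_feasible c' z' -> r <= val_xz x' z') ->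
    (forall z, interdiction_feasible c z -> r <= val_xz x z).
End Design.

From HB Require Import structures.
From mathcomp Require Import all_boot all_order all_algebra.
From mathcomp Require Import reals.
From mathcomp Require Import boolp classical_sets topology normedtype derive.
From mathcomp Require Import ring.
Import Order.TTheory GRing.Theory Num.Theory.
Import numFieldNormedType.Exports.
Set Implicit Arguments. Unset Strict Implicit. Unset Printing Implicit Defensive.
Local Open Scope ring_scope.

(* Let lam := B_I / B_F and weight each path P by w_P := (1 - lam gamma(P))^+,
   where gamma(P) is the sum of gamma_e over the arcs of P.  Take a flow x
   maximising sum_P w_P x_P over X and drop its paths with lam gamma(P) > 1
   (they have weight 0).  Against any feasible (x', c') the interdictor who
   steals lam gamma_e x'_P on every arc e of every path P spends at most
   lam B_F = B_I and leaves exactly sum_P w_P x'_P.  Conversely, with the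
   uniform cost c_e = B_F / Gamma(x) on the arcs carrying flow, an
   interdiction within budget B_I removes at most lam Gamma(x) from the used
   paths, so at least sum_P x_P - lam Gamma(x) = sum_P w_P x_P survives.  The
   maximiser exists because X is a nonempty compact polytope. *)

Section BoundedLinearProgram.
Local Open Scope classical_set_scope.

Lemma continuous_sum (R : realType) (U : topologicalType) (J : Type)
    (f : J -> U -> R) (r : seq J) :
  (forall j, continuous (f j)) -> continuous (fun v => \sum_(j <- r) f j v).
Proof.
move=> cf; elim: r => [|j r IH].
  under eq_fun do rewrite big_nil; exact: cst_continuous.
under eq_fun do rewrite big_cons.
by move=> v; exact: (continuousD (cf j v) (IH v)).
Qed.

Lemma closed_forall_le (R : realType) (U : topologicalType) (J : Type)
    (f : J -> U -> R) (g : J -> R) :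
  (forall j, continuous (f j)) -> closed [set v | forall j, f j v <= g j].
Proof.
move=> cf.
have -> : [set v | forall j, f j v <= g j] =
          \bigcap_(j in setT) (f j @^-1` [set x | x <= g j]).
  by apply/seteqP; split=> [v H j _|v H j]; [exact: H|exact: (H j I)].
apply: closed_bigI => j _; apply: preimage_closed; last exact: closed_le.
by move=> v _; exact: cf.
Qed.

Variables (R : realType) (T I : finType) (a : I -> T -> R) (b : I -> R).

Definition lp_feasible (x : T -> R) : Prop :=
  (forall j, 0 <= x j) /\ (forall i, \sum_j a i j * x j <= b i).

Lemma lp_optimum_exists (w : T -> R) (M : R) :
  (forall i, 0 <= b i) -> (forall x, lp_feasible x -> forall j, x j <= M) ->
  exists2 x, lp_feasible x &
    forall y, lp_feasible y -> \sum_j w j * y j <= \sum_j w j * x j.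
Proof.
move=> b0 bounded.
pose n := #|T|.
pose of_rV (v : 'rV[R]_n) (j : T) := v ord0 (enum_rank j).
pose to_rV (y : T -> R) : 'rV[R]_n := \row_k y (enum_val k).
have of_to_rV y : of_rV (to_rV y) = y.
  by apply/funext => j; rewrite /of_rV mxE enum_rankK.
pose L (c : T -> R) (v : 'rV[R]_n) := \sum_j c j * of_rV v j.
have L_cont c : continuous (L c).
  apply: continuous_sum => j v; apply: continuousM; first exact: cst_continuous.
  exact: coord_continuous.
pose K := [set v : 'rV[R]_n | forall k, `[0, M] (v ord0 k)] `&`
          [set v | forall i, L (a i) v <= b i].
have K_compact : compact K.
  apply: compact_closedI; last exact: closed_forall_le.
  by apply: (@rV_compact _ n (fun=> `[0, M])) => _; exact: segment_compact.
have K0 : K !=set0.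
  have zero_feasible : lp_feasible (fun=> 0).
    by split=> // i; rewrite big1 // => j _; rewrite mulr0.
  exists 0; split=> [k|i]; rewrite ?mxE /= ?in_itv /= ?lexx.
    exact: bounded zero_feasible (enum_val k).
  by rewrite /L big1 // => j _; rewrite /of_rV mxE mulr0.
have [v /[!inE] -[v_box v_cons] v_max] :=
  compact_EVT_max K0 K_compact (continuous_subspaceT (L_cont w)).
exists (of_rV v).
  by split=> // j; have := v_box (enum_rank j); rewrite /= in_itv /= => /andP[].
move=> y [y0 y_cons]; rewrite -[in leLHS](of_to_rV y); apply: v_max.
rewrite inE; split=> [k|i]; last by rewrite /L of_to_rV.
by rewrite mxE /= in_itv /= y0 bounded.
Qed.

End BoundedLinearProgram.

Lemma stpath_nonempty (V A : finType) (tl hd : A -> V) (s t : V)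
    (P : stpath_t tl hd s t) :
  exists e, e \in val P.
Proof.
case: P => S /= /existsP [tup /andP [hp /eqP ->]].
case: tup hp => [[|a l] ?] //= _; exists a.
by rewrite inE /= in_cons eqxx.
Qed.

Section RobustFlowDesign.
Variables (R : realType) (V A : finType) (tl hd : A -> V) (s t : V).
Local Notation path := (stpath_t tl hd s t).
Variables (u gamma : A -> R) (BF BI : R).
Hypotheses (hu : forall e, 0 <= u e) (hgamma : forall e, 0 <= gamma e).
Hypotheses (hBF : 0 < BF) (hBI : 0 <= BI).
Implicit Types (x : path -> R) (c : A -> R) (z : A -> path -> R) (P : path) (e : A).

Definition path_gamma (P : path) : R := \sum_(e in val P) gamma e.

Definition interdiction_rate : R := BI / BF.
Local Notation lam := interdiction_rate.

Definition path_weight (P : path) : R := Num.max 0 (1 - lam * path_gamma P).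

Definition robust_value x : R := \sum_P path_weight P * x P.

Definition truncate_flow x P : R :=
  if lam * path_gamma P <= 1 then x P else 0.

Definition carries x e : bool :=
  [exists P : path, (e \in val P) && (0 < x P)].

Definition uniform_cost x e : R :=
  if carries x e then BF / Gamma gamma x else 0.

Definition proportional_interdiction (x : path -> R) (e : A) (P : path) : R :=
  lam * gamma e * x P.

Lemma interdiction_rate_ge0 : 0 <= lam.
Proof. by rewrite divr_ge0 // ltW. Qed.

Lemma path_gamma_ge0 P : 0 <= path_gamma P.
Proof. exact: sumr_ge0. Qed.

Lemma sum_arcs_paths (F : A -> path -> R) :
  \sum_e \sum_(P : path | e \in val P) F e P =
  \sum_(P : path) \sum_(e in val P) F e P.
Proof. by rewrite (exchange_big_dep xpredT). Qed.

Lemma Gamma_path_gamma x : Gamma gamma x = \sum_P path_gamma P * x P.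
Proof. by apply: eq_bigr => P _; rewrite mulr_suml. Qed.

Lemma Gamma_ge0 x : (forall P, 0 <= x P) -> 0 <= Gamma gamma x.
Proof.
move=> x0; rewrite Gamma_path_gamma sumr_ge0 // => P _.
by rewrite mulr_ge0 ?path_gamma_ge0.
Qed.

Lemma uniform_cost_ge0 x e : (forall P, 0 <= x P) -> 0 <= uniform_cost x e.
Proof.
by move=> x0; rewrite /uniform_cost; case: ifP => // _;
  rewrite divr_ge0 ?Gamma_ge0 ?ltW.
Qed.

Lemma Gamma_arc_flow x : Gamma gamma x = \sum_e gamma e * arc_flow x e.
Proof.
by rewrite /Gamma -sum_arcs_paths; apply: eq_bigr => e _; rewrite mulr_sumr.
Qed.

Lemma flow_feasible_lp x :
  flow_feasible u x <-> lp_feasible (fun e (P : path) => (e \in val P)%:R) u x.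
Proof.
suff arc_flowE e : arc_flow x e = \sum_(P : path) (e \in val P)%:R * x P.
  by split=> -[x0 cap]; split=> // e; move: (cap e); rewrite arc_flowE.
rewrite /arc_flow big_mkcond; apply: eq_bigr => P _.
by case: (e \in val P); rewrite ?mul1r ?mul0r.
Qed.

Lemma flow_le_capacity_sum x P : flow_feasible u x -> x P <= \sum_e u e.
Proof.
move=> [x0 cap]; have [e eP] := stpath_nonempty P.
apply: le_trans (le_trans (cap e) _).
  by rewrite /arc_flow (bigD1 P) //= lerDl sumr_ge0.
by rewrite (bigD1 e) //= lerDl sumr_ge0.
Qed.

Lemma robust_optimal_flow_exists :
  exists2 x, flow_feasible u x &
    forall y, flow_feasible u y -> robust_value y <= robust_value x.
Proof.
have [x /flow_feasible_lp x_feas x_max] :=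
  lp_optimum_exists path_weight hu (fun y y_feas P =>
    flow_le_capacity_sum P (proj2 (flow_feasible_lp y) y_feas)).
by exists x => // y /flow_feasible_lp; exact: x_max.
Qed.

Lemma truncate_flow_feasible x :
  flow_feasible u x -> flow_feasible u (truncate_flow x).
Proof.
move=> [x0 cap]; split=> [P|e]; first by rewrite /truncate_flow; case: ifP.
apply: le_trans (cap e); apply: ler_sum => P _.
by rewrite /truncate_flow; case: ifP.
Qed.

Lemma robust_value_truncate x : robust_value (truncate_flow x) = robust_value x.
Proof.
apply: eq_bigr => P _; rewrite /truncate_flow; case: ifP => // /negbT.
rewrite -ltNge /path_weight => /ltW.
by rewrite -subr_le0 => /max_l ->; rewrite !mul0r.
Qed.

Lemma robust_value_truncateE x :
  robust_value (truncate_flow x) =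
  \sum_P truncate_flow x P - lam * Gamma gamma (truncate_flow x).
Proof.
rewrite Gamma_path_gamma mulr_sumr -sumrB; apply: eq_bigr => P _.
rewrite /path_weight /truncate_flow; case: ifP => [|_]; last by rewrite !mulr0 subr0.
by rewrite -subr_ge0 => /max_r ->; ring.
Qed.

Lemma uniform_cost_feasible x :
  flow_feasible u x -> design_feasible u gamma BF x (uniform_cost x).
Proof.
move=> x_feas; have [x0 _] := x_feas.
split=> //; split=> [e _|]; first exact: uniform_cost_ge0.
have idle e : ~~ carries x e -> arc_flow x e = 0.
  move=> /existsPn idle_e; rewrite /arc_flow big1 // => P eP.
  by apply/eqP; move: (idle_e P); rewrite eP lt_def x0 andbT negbK.
have -> : \sum_e gamma e * uniform_cost x e * arc_flow x e =
          BF / Gamma gamma x * Gamma gamma x.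
  rewrite {2}Gamma_arc_flow mulr_sumr; apply: eq_bigr => e _.
  rewrite /uniform_cost; case: ifPn => [_|/idle ->]; first ring.
  by rewrite !mulr0.
have [->|G0] := eqVneq (Gamma gamma x) 0; first by rewrite mulr0 ltW.
by rewrite divfK.
Qed.

Lemma proportional_interdiction_feasible x c :
  design_feasible u gamma BF x c ->
  interdiction_feasible gamma BI c (proportional_interdiction x).
Proof.
move=> [[x0 _] [_ budget]]; have lam0 := interdiction_rate_ge0.
split=> [e P|]; first exact: mulr_ge0 (mulr_ge0 lam0 (hgamma e)) (x0 P).
split=> [e P|]; first by rewrite /proportional_interdiction => ->; rewrite mulr0 mul0r.
have -> : BI = lam * BF by rewrite /interdiction_rate divfK ?gt_eqF.
apply: le_trans (ler_wpM2l lam0 budget); rewrite mulr_sumr.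
apply: ler_sum => e _; rewrite /arc_flow !mulr_sumr le_eqVlt; apply/orP; left.
by apply/eqP/eq_bigr => P _; rewrite /proportional_interdiction; ring.
Qed.

Lemma val_proportional_interdiction x :
  (forall P, 0 <= x P) -> val_xz x (proportional_interdiction x) = robust_value x.
Proof.
move=> x0; apply: eq_bigr => P _.
rewrite /proportional_interdiction -mulr_suml -mulr_sumr.
have -> : x P - lam * path_gamma P * x P = (1 - lam * path_gamma P) * x P by ring.
by rewrite /path_weight maxr_pMl // mul0r.
Qed.

Lemma val_xz_ge_sum_sub_stolen x z :
  (forall P, 0 <= x P) ->
  \sum_P x P - \sum_(P | 0 < x P) \sum_(e in val P) z e P <= val_xz x z.
Proof.
move=> x0; rewrite [X in _ - X <= _]big_mkcond -sumrB; apply: ler_sum => P _.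
case: ifPn => [_|]; first by rewrite le_max lexx orbT.
by rewrite lt_def x0 andbT negbK => /eqP ->; rewrite subrr le_max lexx.
Qed.

Lemma Gamma_eq0_used_arc x P e :
  (forall P, 0 <= x P) -> Gamma gamma x = 0 ->
  0 < x P -> e \in val P -> gamma e = 0.
Proof.
move=> x0; rewrite Gamma_path_gamma => G0 xP eP.
have gx0 Q : 0 <= path_gamma Q * x Q by rewrite mulr_ge0 ?path_gamma_ge0.
have /eqP := psumr_eq0P (fun Q _ => gx0 Q) G0 (i := P) isT.
rewrite mulf_eq0 (gt_eqF xP) orbF => /eqP gP.
exact: (psumr_eq0P (fun e _ => hgamma e) gP eP).
Qed.

Lemma uniform_cost_stolen_le x z :
  (forall P, 0 <= x P) ->
  interdiction_feasible gamma BI (uniform_cost x) z ->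
  \sum_(P | 0 < x P) \sum_(e in val P) z e P <= lam * Gamma gamma x.
Proof.
move=> x0 [z0 [z_free budget]].
have [G0|Gn0] := eqVneq (Gamma gamma x) 0.
  rewrite G0 mulr0 big1 // => P xP; apply: big1 => e eP.
  by apply: z_free; exact: Gamma_eq0_used_arc G0 xP eP.
have Gp : 0 < Gamma gamma x by rewrite lt_def Gn0 Gamma_ge0.
have kp : 0 < BF / Gamma gamma x by rewrite divr_gt0.
have -> : lam * Gamma gamma x = BI / (BF / Gamma gamma x).
  by rewrite /interdiction_rate; field; rewrite ?gt_eqF.
rewrite ler_pdivlMr // mulrC mulr_sumr; apply: le_trans budget.
apply: (@le_trans _ _ (\sum_(P : path) \sum_(e in val P) uniform_cost x e * z e P)).
  rewrite big_mkcond; apply: ler_sum => P _; case: ifP => [xP|_].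
    rewrite mulr_sumr; apply: ler_sum => e eP; rewrite /uniform_cost ifT //.
    by apply/existsP; exists P; rewrite eP xP.
  by apply: sumr_ge0 => e _; rewrite mulr_ge0 ?uniform_cost_ge0.
by rewrite -sum_arcs_paths; apply: ler_sum => e _; rewrite mulr_sumr.
Qed.

Lemma robust_value_le_val_xz x z :
  (forall P, 0 <= x P) ->
  interdiction_feasible gamma BI (uniform_cost (truncate_flow x)) z ->
  robust_value (truncate_flow x) <= val_xz (truncate_flow x) z.
Proof.
move=> x0 z_feas; have tx0 P : 0 <= truncate_flow x P.
  by rewrite /truncate_flow; case: ifP.
rewrite robust_value_truncateE; apply: le_trans (val_xz_ge_sum_sub_stolen z tx0).
by rewrite lerD2l lerN2 uniform_cost_stolen_le.
Qed.

End RobustFlowDesign.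

Theorem lemma3 (R : realType) (V A : finType) (tl hd : A -> V) (s t : V)
    (u gamma : A -> R) (BF BI : R)
    (hu : forall e, 0 <= u e) (hgamma : forall e, 0 <= gamma e)
    (hBF : 0 < BF) (hBI : 0 <= BI) :
  exists (x : stpath_t tl hd s t -> R) (c : A -> R),
    design_optimal u gamma BF BI x c /\
    forall e : A, 0 < gamma e ->
      ((exists P : stpath_t tl hd s t, e \in val P /\ 0 < x P) ->
         c e = BF / Gamma gamma x) /\
      (~ (exists P : stpath_t tl hd s t, e \in val P /\ 0 < x P) ->
         c e = 0).
Proof.
have [x0 x0_feas x0_max] := robust_optimal_flow_exists tl hd s t gamma BF BI hu.
set x := truncate_flow gamma BF BI x0.
exists x, (uniform_cost gamma BF x); split; last first.
  move=> e _; rewrite /uniform_cost; split=> [[P [eP xP]]|no_path].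
    by rewrite ifT //; apply/existsP; exists P; rewrite eP xP.
  rewrite ifF //; apply/negbTE/existsP => -[P /andP[eP xP]].
  by apply: no_path; exists P.
split.
  exact: uniform_cost_feasible (truncate_flow_feasible _ _ _ x0_feas).
move=> x' c' design' r r_le z z_feas.
have [[x'0 _] _] := design'.
apply: le_trans (r_le _ (proportional_interdiction_feasible hgamma hBF hBI design')) _.
rewrite val_proportional_interdiction //.
apply: le_trans (x0_max _ (proj1 design')) _.
rewrite -robust_value_truncate.
exact: robust_value_le_val_xz (proj1 x0_feas) z_feas.
Qed.
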